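(* Let $\boldsymbol{N}\in\mathbb{R}^3$ with $\|\boldsymbol{N}\|=1$ and $\boldsymbol{G}^{\mathrm{ti}}=\boldsymbol{N}\otimes\boldsymbol{N}$. For $\boldsymbol{F}\in\mathrm{GL}^+(3)$ let $\boldsymbol{H}=\operatorname{cof}\boldsymbol{F}=(\det\boldsymbol{F})\boldsymbol{F}^{-T}$. Then the functions $$I_4^{\mathrm{ti}}(\boldsymbol{F})=\|\boldsymbol{F}\|^2-\|\boldsymbol{F}\boldsymbol{G}^{\mathrm{ti}}\|^2,\qquad I_5^{\mathrm{ti}}(\boldsymbol{F})=\|\boldsymbol{H}\|^2-\|\boldsymbol{H}\boldsymbol{G}^{\mathrm{ti}}\|^2$$ are twice continuously differentiable and polyconvex.
   Context: $\|\cdot\|$ is the Frobenius norm and $\mathrm{GL}^+(3)$ is the set of real $3\times3$ matrices with positive determinant. A function $W$ of $\boldsymbol{F}$ is polyconvex if it admits a representation $W(\boldsymbol{F})=\mathcal{P}(\boldsymbol{F},\operatorname{cof}\boldsymbol{F},\det\boldsymbol{F})$ with $\mathcal{P}$ convex in its arguments. *)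

From HB Require Import structures.
From mathcomp Require Import all_boot all_order all_algebra.
From mathcomp Require Import all_classical all_reals all_analysis.
Set Implicit Arguments. Unset Strict Implicit. Unset Printing Implicit Defensive.
Import Order.TTheory GRing.Theory Num.Theory.
Import numFieldNormedType.Exports.
Local Open Scope classical_set_scope.
Local Open Scope ring_scope.

Definition frob {R : realType} {m n : nat} (A : 'M[R]_(m, n)) : R :=
  Num.sqrt (\sum_(i < m) \sum_(j < n) (A i j) ^+ 2).

(* cofactor matrix: cof F = (adj F)^T  (= (det F) F^{-T} for invertible F) *)
Definition cof {R : realType} (F : 'M[R]_3) : 'M[R]_3 := (\adj F)^T.

Definition GLplus3 {R : realType} : set 'M[R]_3 := [set F | 0 < \det F].

Definition C2_on {R : realType} (U : set 'M[R]_3) (f : 'M[R]_3 -> R) : Prop :=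
  forall i j k l : 'I_3,
    let e1 := delta_mx i j : 'M[R]_3 in
    let e2 := delta_mx k l : 'M[R]_3 in
    forall x, U x ->
      [/\ {for x, continuous f},
          derivable f x e1,
          {for x, continuous ('D_e1 f)},
          derivable ('D_e1 f) x e2 &
          {for x, continuous ('D_e2 ('D_e1 f))}].

Definition convex_P {R : realType} (P : 'M[R]_3 -> 'M[R]_3 -> R -> R) : Prop :=
  forall (F1 H1 F2 H2 : 'M[R]_3) (d1 d2 t : R),
    0 < d1 -> 0 < d2 -> 0 <= t <= 1 ->
    P (t *: F1 + (1 - t) *: F2) (t *: H1 + (1 - t) *: H2) (t * d1 + (1 - t) * d2)
      <= t * P F1 H1 d1 + (1 - t) * P F2 H2 d2.

Definition polyconvex {R : realType} (W : 'M[R]_3 -> R) : Prop :=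
  exists P : 'M[R]_3 -> 'M[R]_3 -> R -> R,
    convex_P P /\ forall F, GLplus3 F -> W F = P F (cof F) (\det F).

Definition Gti {R : realType} (N : 'cV[R]_3) : 'M[R]_3 := N *m N^T.

Definition I4ti {R : realType} (N : 'cV[R]_3) (F : 'M[R]_3) : R :=
  frob F ^+ 2 - frob (F *m Gti N) ^+ 2.

Definition I5ti {R : realType} (N : 'cV[R]_3) (F : 'M[R]_3) : R :=
  frob (cof F) ^+ 2 - frob (cof F *m Gti N) ^+ 2.

(* Both invariants are polynomials in the entries of F, hence C^2: functions
   that are C^k along every direction are closed under sums and products and
   contain the (linear) coordinate maps.  Since |N| = 1, G = N N^T is an
   orthogonal projection, so I4(F) = |F (1 - G)|^2 is a positive semidefinite
   quadratic form, hence convex; and I5(F) = I4(cof F).  So I4 and I5 are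
   polyconvex with P depending on F alone, resp. on cof F alone. *)

From HB Require Import structures.
From mathcomp Require Import all_boot all_order all_algebra.
From mathcomp Require Import all_classical all_reals all_analysis.
From mathcomp Require Import ring.
Set Implicit Arguments.
Unset Strict Implicit.
Unset Printing Implicit Defensive.

Import Order.TTheory GRing.Theory Num.Theory.
Import numFieldNormedType.Exports.
Local Open Scope ring_scope.

Section CkFunctions.
Variables (R : realType) (V : normedModType R).

Fixpoint Ck (k : nat) (f : V -> R) : Prop :=
  match k with
  | 0 => continuous f
  | k.+1 => continuous f /\ forall v, (forall x, derivable f x v) /\ Ck k ('D_v f)
  end.

Lemma CkS k f : Ck k.+1 f -> Ck k f.
Proof.
elim: k f => [|k IHk] f /=; first by case.
by move=> [cf Df]; split=> // v; have [dfv /IHk] := Df v.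
Qed.

Lemma Ck_cst k (a : R) : Ck k (cst a).
Proof.
elim: k a => [|k IHk] a /=; first exact: cst_continuous.
split=> [|v]; first exact: cst_continuous.
split=> [x|]; first exact: derivable_cst.
have -> : 'D_v (cst a) = cst 0 by apply/funext => x; rewrite derive_cst.
exact: IHk.
Qed.

Lemma Ck_add k f g : Ck k f -> Ck k g -> Ck k (f + g).
Proof.
elim: k f g => [|k IHk] f g /=.
  by move=> cf cg x; apply: continuousD (cf x) (cg x).
move=> [cf Df] [cg Dg]; split=> [x|v]; first exact: continuousD (cf x) (cg x).
have [dfv Cf] := Df v; have [dgv Cg] := Dg v.
split=> [x|]; first exact: derivableD (dfv x) (dgv x).
have -> : 'D_v (f + g) = 'D_v f + 'D_v g by apply/funext => x; rewrite deriveD.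
exact: IHk.
Qed.

Lemma Ck_mul k f g : Ck k f -> Ck k g -> Ck k (f * g).
Proof.
elim: k f g => [|k IHk] f g /=.
  by move=> cf cg x; apply: continuousM (cf x) (cg x).
move=> [cf Df] [cg Dg]; split=> [x|v]; first exact: continuousM (cf x) (cg x).
have [dfv Cf] := Df v; have [dgv Cg] := Dg v.
split=> [x|]; first exact: derivableM (dfv x) (dgv x).
have -> : 'D_v (f * g) = f * 'D_v g + g * 'D_v f.
  by apply/funext => x; rewrite deriveM.
by apply: Ck_add; apply: IHk => //; apply: CkS; split.
Qed.

Lemma Ck_opp k f : Ck k f -> Ck k (- f).
Proof.
have -> : - f = cst (-1) * f by apply/funext => x /=; rewrite mulN1r.
by move=> Cf; apply/Ck_mul/Cf/Ck_cst.
Qed.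

Lemma Ck_sub k f g : Ck k f -> Ck k g -> Ck k (f - g).
Proof. by move=> Cf Cg; apply/Ck_add/Ck_opp. Qed.

Lemma Ck_sum k (I : Type) (r : seq I) (P : pred I) (F : I -> V -> R) :
  (forall i, P i -> Ck k (F i)) -> Ck k (fun x => \sum_(i <- r | P i) F i x).
Proof.
by move=> CF; rewrite -fct_sumE; apply: big_ind => //; [apply: Ck_cst | apply: Ck_add].
Qed.

Lemma Ck_prod k (I : Type) (r : seq I) (P : pred I) (F : I -> V -> R) :
  (forall i, P i -> Ck k (F i)) -> Ck k (fun x => \prod_(i <- r | P i) F i x).
Proof.
by move=> CF; rewrite -fct_prodE; apply: big_ind => //; [apply: Ck_cst | apply: Ck_mul].
Qed.

Lemma Ck_linear k (f : {linear V -> R}) : continuous f -> Ck k f.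
Proof.
case: k => [//|k] cf /=; split=> // v; split=> [x|].
  exact/diff_derivable/linear_differentiable.
have -> : 'D_v f = cst (f v).
  by apply/funext => x; rewrite deriveE ?diff_lin //; apply: linear_differentiable.
exact: Ck_cst.
Qed.

Lemma Ck_det k n (A : V -> 'M[R]_n) :
  (forall i j, Ck k (fun x => A x i j)) -> Ck k (fun x => \det (A x)).
Proof.
move=> CA; apply: Ck_sum => s _; apply: Ck_mul; first exact: Ck_cst.
by apply: Ck_prod => i _; apply: CA.
Qed.

Lemma Ck_mulmx k m n p (A : V -> 'M[R]_(m, n)) (B : V -> 'M[R]_(n, p)) :
  (forall i j, Ck k (fun x => A x i j)) -> (forall i j, Ck k (fun x => B x i j)) ->
  forall i j, Ck k (fun x => (A x *m B x) i j).
Proof.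
move=> CA CB i j; under eq_fun do rewrite mxE.
by apply: Ck_sum => l _; apply: Ck_mul.
Qed.

Lemma Ck_adj k n (A : V -> 'M[R]_n) :
  (forall i j, Ck k (fun x => A x i j)) -> forall i j, Ck k (fun x => \adj (A x) i j).
Proof.
move=> CA i j; under eq_fun do rewrite mxE /cofactor.
apply: Ck_mul; first exact: Ck_cst.
by apply: Ck_det => a b; under eq_fun do rewrite !mxE.
Qed.

Lemma Ck_sum_sqr k m n (A : V -> 'M[R]_(m, n)) :
  (forall i j, Ck k (fun x => A x i j)) ->
  Ck k (fun x => \sum_i \sum_j A x i j ^+ 2).
Proof. by move=> CA; do 2!apply: Ck_sum => ? _; apply: Ck_mul. Qed.

End CkFunctions.

Lemma Ck_coord (R : realType) k m n (i : 'I_m) (j : 'I_n) :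
  Ck k (fun A : 'M[R]_(m, n) => A i j).
Proof.
pose coord_ij (A : 'M[R]_(m, n)) := A i j.
have coord_lin : linear coord_ij by move=> a A B; rewrite /coord_ij !mxE.
pose L : {linear 'M[R]_(m, n) -> R} :=
  HB.pack coord_ij (GRing.isLinear.Build _ _ _ _ _ coord_lin).
exact: (@Ck_linear _ _ k L (@coord_continuous _ _ _ i j)).
Qed.

Lemma C2_on_Ck2 (R : realType) (U : set 'M[R]_3) (f : 'M[R]_3 -> R) :
  Ck 2 f -> C2_on U f.
Proof.
move=> [cf Df] i j k l e1 e2 x _.
have [d1 [c1 D1]] := Df e1; have [d2 c2] := D1 e2.
by split; [exact: cf | exact: d1 | exact: c1 | exact: d2 | exact: c2].
Qed.

Section Frobenius.
Variable R : realType.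

Lemma frob2E m n (A : 'M[R]_(m, n)) : frob A ^+ 2 = \sum_i \sum_j A i j ^+ 2.
Proof.
by rewrite sqr_sqrtr // !sumr_ge0 // => i _; rewrite sumr_ge0 // => j _; apply: sqr_ge0.
Qed.

Lemma frob2_trace m n (A : 'M[R]_(m, n)) : frob A ^+ 2 = \tr (A *m A^T).
Proof.
rewrite frob2E /mxtrace; apply: eq_bigr => i _; rewrite mxE.
by apply: eq_bigr => j _; rewrite mxE expr2.
Qed.

Lemma frob2_convex_combE m n (A B : 'M[R]_(m, n)) (t : R) :
  frob (t *: A + (1 - t) *: B) ^+ 2 =
  t * frob A ^+ 2 + (1 - t) * frob B ^+ 2 - t * (1 - t) * frob (A - B) ^+ 2.
Proof.
rewrite !frob2E !mulr_sumr -big_split -sumrB /=; apply: eq_bigr => i _.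
rewrite !mulr_sumr -big_split -sumrB /=; apply: eq_bigr => j _.
by rewrite !mxE; ring.
Qed.

Lemma frob2_convex m n (A B : 'M[R]_(m, n)) (t : R) : 0 <= t <= 1 ->
  frob (t *: A + (1 - t) *: B) ^+ 2 <= t * frob A ^+ 2 + (1 - t) * frob B ^+ 2.
Proof.
move=> /andP[t_ge0 t_le1]; rewrite frob2_convex_combE lerBlDr lerDl.
by rewrite mulr_ge0 ?sqr_ge0 // mulr_ge0 ?subr_ge0.
Qed.

Lemma frob2_proj_split m n (X : 'M[R]_(m, n)) (G : 'M[R]_n) :
  G^T = G -> G *m G = G ->
  frob X ^+ 2 = frob (X *m G) ^+ 2 + frob (X *m (1%:M - G)) ^+ 2.
Proof.
move=> symG idemG.
have idemC : (1%:M - G) *m (1%:M - G) = 1%:M - G.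
  by rewrite mulmxBl mul1mx mulmxBr mulmx1 idemG subrr subr0.
have symC : (1%:M - G)^T = 1%:M - G by rewrite linearB /= trmx1 symG.
rewrite !frob2_trace !trmx_mul symG symC -!mulmxA.
rewrite (mulmxA G) (mulmxA (1%:M - G)) idemG idemC -linearD /=.
by rewrite -mulmxDr -mulmxDl addrC subrK mul1mx.
Qed.

End Frobenius.

Section TransverseInvariant.
Variables (R : realType) (N : 'cV[R]_3).

Lemma Ck_I4ti (V : normedModType R) k (A : V -> 'M[R]_3) :
  (forall i j, Ck k (fun x => A x i j)) -> Ck k (fun x => I4ti N (A x)).
Proof.
move=> CA; under eq_fun do rewrite /I4ti !frob2E.
apply: Ck_sub; apply: Ck_sum_sqr => //.
by apply: Ck_mulmx => // i j; apply: Ck_cst.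
Qed.

Hypothesis N_unit : frob N = 1.

Lemma Gti_sym : (Gti N)^T = Gti N.
Proof. by rewrite /Gti trmx_mul trmxK. Qed.

Lemma Gti_idem : Gti N *m Gti N = Gti N.
Proof.
have NTN : N^T *m N = 1%:M.
  apply/matrixP => i j; rewrite !ord1 !mxE eqxx mulr1n -(expr1n _ 2) -N_unit frob2E.
  by apply: eq_bigr => l _; rewrite big_ord1 mxE expr2.
by rewrite /Gti mulmxA -(mulmxA N) NTN mulmx1.
Qed.

Lemma I4ti_projE F : I4ti N F = frob (F *m (1%:M - Gti N)) ^+ 2.
Proof. by rewrite /I4ti (frob2_proj_split F Gti_sym Gti_idem) addrAC subrr add0r. Qed.

Lemma I4ti_convex (A B : 'M[R]_3) (t : R) : 0 <= t <= 1 ->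
  I4ti N (t *: A + (1 - t) *: B) <= t * I4ti N A + (1 - t) * I4ti N B.
Proof. by move=> t01; rewrite !I4ti_projE mulmxDl -!scalemxAl frob2_convex. Qed.

End TransverseInvariant.

Theorem corollary1 (R : realType) (N : 'cV[R]_3) (hN : frob N = 1) :
  C2_on GLplus3 (I4ti N) /\ C2_on GLplus3 (I5ti N) /\
  polyconvex (I4ti N) /\ polyconvex (I5ti N).
Proof.
have C_coord k (i j : 'I_3) : Ck k (fun F : 'M[R]_3 => F i j) by apply: Ck_coord.
split; [|split; [|split]].
- exact/C2_on_Ck2/Ck_I4ti.
- apply/C2_on_Ck2/Ck_I4ti => i j; rewrite /cof.
  by under eq_fun do rewrite mxE; apply: Ck_adj.
- exists (fun F _ _ => I4ti N F); split=> // F1 H1 F2 H2 d1 d2 t _ _.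
  exact: I4ti_convex.
- exists (fun _ H _ => I4ti N H); split=> // F1 H1 F2 H2 d1 d2 t _ _.
  exact: I4ti_convex.
Qed.
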